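(* Let $\mathcal{S}=\partial\Omega$ where $\Omega\subset\mathbb{R}^n$ is a non-empty bounded open set with $C^k$ boundary, $k\ge 2$. Let $q\in\mathbb{R}^n\setminus\mathcal{S}$ and suppose that $m=|\Gamma(q)|<\infty$, with $\Gamma(q)=\{p_1,\dots,p_m\}$. Then there exist $r>\mathrm{dist}(q,\mathcal{S})$ and pairwise-disjoint connected closed subsets $S_1,\dots,S_m\subset\mathcal{S}$ with $$\overline{B}(q,r)\cap\mathcal{S}\supset\bigsqcup_{i=1}^m S_i,\qquad p_i\in\mathrm{int}_{\mathcal{S}}(S_i)\ \text{ for each } i,$$ where $\mathrm{int}_{\mathcal{S}}$ denotes interior in the induced topology of $\mathcal{S}$. Moreover, setting $\alpha_i=\mathrm{dist}(\cdot,S_i)$, there exists a neighborhood $N$ of $q$ such that $\mathrm{dist}(x,\mathcal{S})=\min_{i=1,\dots,m}\alpha_i(x)$ for all $x\in N$.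
   Context: For $A\subset\mathbb{R}^n$, $\mathrm{dist}(q,A)=\inf_{y\in A}\|q-y\|$. For $q\in\mathbb{R}^n$, $\Gamma(q)=\{p\in\mathcal{S}: \|q-p\|=\mathrm{dist}(q,\mathcal{S})\}$ is the set of contact (closest) points of $q$ on $\mathcal{S}$. *)

From HB Require Import structures.
From mathcomp Require Import all_boot all_order all_algebra.
From mathcomp Require Import all_classical all_reals all_analysis.
Set Implicit Arguments. Unset Strict Implicit. Unset Printing Implicit Defensive.
Import Order.TTheory GRing.Theory Num.Theory.
Import numFieldNormedType.Exports.
Local Open Scope classical_set_scope.
Local Open Scope ring_scope.

(* Euclidean norm on R^n (the library's norm on 'rV is the max norm;
   it induces the same topology, but distances must be Euclidean). *)
Definition enorm (R : realType) (n : nat) (x : 'rV[R]_n) : R :=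
  Num.sqrt (\sum_(i < n) x ord0 i ^+ 2).

Definition dist (R : realType) (n : nat) (q : 'rV[R]_n) (A : set 'rV[R]_n) : R :=
  inf [set enorm (q - y) | y in A].

Definition contact (R : realType) (n : nat) (S : set 'rV[R]_n) (q : 'rV[R]_n)
  : set 'rV[R]_n :=
  [set p | S p /\ enorm (q - p) = dist q S].

Definition cball_e (R : realType) (n : nat) (q : 'rV[R]_n) (r : R) : set 'rV[R]_n :=
  [set x | enorm (x - q) <= r].

Definition boundary (T : topologicalType) (A : set T) : set T :=
  closure A `\` interior A.

Definition relint (T : topologicalType) (S A : set T) : set T :=
  [set p | A p /\ exists U, open U /\ U p /\ U `&` S `<=` A].

Fixpoint CkOn (R : realType) (n : nat) (k : nat) (U : set 'rV[R]_n)
    (f : 'rV[R]_n -> R) : Prop :=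
  match k with
  | 0 => forall x, U x -> {for x, continuous f}
  | k'.+1 => (forall x, U x -> differentiable f x) /\
             forall v : 'rV[R]_n, CkOn k' U ('D_v f)
  end.

Definition Ck_boundary (R : realType) (n : nat) (k : nat) (Om : set 'rV[R]_n) : Prop :=
  open Om /\
  forall p, boundary Om p ->
    exists U : set 'rV[R]_n, exists phi : 'rV[R]_n -> R,
      [/\ open U, U p, CkOn k U phi,
          (forall x, U x -> exists v : 'rV[R]_n, 'D_v phi x != 0) &
          Om `&` U = [set x | U x /\ phi x < 0]].

(* Near a boundary point p, a C^1 defining function phi of Om and a direction v
   with D_v phi p > 0 make phi strictly increasing along the segments
   y + [-dl, dl] v for y close to p, with opposite signs at their ends; so each
   segment meets the boundary exactly once, at a time tf y that depends
   continuously on y. The image of a small closed ball under y |-> y + tf y v is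
   then a compact connected piece of the boundary containing a relative
   neighbourhood of p. Taking such pieces S_i around the contact points p_i
   inside their Voronoi cells makes them disjoint. The union V of these relative
   neighbourhoods contains every contact point of q and, by compactness, the rest
   of the boundary stays farther than dist(q, S) from q; hence for x near q every
   nearest boundary point of x lies in some S_i, so dist(x, S) = min_i dist(x, S_i). *)

From HB Require Import structures.
From mathcomp Require Import all_boot all_order all_algebra.
From mathcomp Require Import all_classical all_reals all_analysis.
From mathcomp Require Import ring lra.

Set Implicit Arguments.
Unset Strict Implicit.
Unset Printing Implicit Defensive.
Import Order.TTheory GRing.Theory Num.Theory.
Import numFieldNormedType.Exports.
Local Open Scope classical_set_scope.
Local Open Scope ring_scope.

Section euclidean_norm.
Variables (R : realType) (n : nat).
Implicit Types (x y z : 'rV[R]_n) (A B : set 'rV[R]_n).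

Lemma enorm_ge0 x : 0 <= enorm x.
Proof. exact: sqrtr_ge0. Qed.

Lemma enorm0 : enorm (0 : 'rV[R]_n) = 0.
Proof. by rewrite /enorm big1 ?sqrtr0 // => i _; rewrite mxE expr0n. Qed.

Lemma enorm_distC x y : enorm (x - y) = enorm (y - x).
Proof.
by rewrite /enorm; congr Num.sqrt; apply: eq_bigr => i _; rewrite !mxE -sqrrN opprB.
Qed.

Lemma CauchySchwarz_sum (a b : 'I_n -> R) :
  \sum_i a i * b i <= Num.sqrt (\sum_i a i ^+ 2) * Num.sqrt (\sum_i b i ^+ 2).
Proof.
set A := \sum_i a i ^+ 2; set B := \sum_i b i ^+ 2; set S := \sum_i a i * b i.
have sumsq_eq0 (c : 'I_n -> R) i : \sum_j c j ^+ 2 <= 0 -> c i = 0.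
  move=> c0; apply/eqP; rewrite -sqrf_eq0; apply/eqP.
  have ge0 j : true -> 0 <= c j ^+ 2 by move=> _; exact: sqr_ge0.
  by apply: (psumr_eq0P ge0) => //; apply/le_anti; rewrite c0 sumr_ge0.
have quadratic u w : 2 * (u * w) * S <= u ^+ 2 * A + w ^+ 2 * B.
  rewrite /S /A /B !mulr_sumr -big_split /=; apply: ler_sum => i _.
  by have := sqr_ge0 (u * a i - w * b i); rewrite sqrrB; lra.
have [AB0|ABneq0] := eqVneq (Num.sqrt A * Num.sqrt B) 0.
  suff -> : S = 0 by rewrite AB0.
  move/eqP: AB0; rewrite mulf_eq0 !sqrtr_eq0 => /orP[A0|B0].
    by rewrite /S big1 // => i _; rewrite (sumsq_eq0 a) ?mul0r.
  by rewrite /S big1 // => i _; rewrite (sumsq_eq0 b) ?mulr0.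
have ABgt0 : 0 < Num.sqrt A * Num.sqrt B by rewrite lt_def ABneq0 mulr_ge0 ?sqrtr_ge0.
have A0 : 0 <= A by apply: sumr_ge0 => i _; exact: sqr_ge0.
have B0 : 0 <= B by apply: sumr_ge0 => i _; exact: sqr_ge0.
(* [quadratic] at u = sqrt B, w = sqrt A reads 2 sqrt(AB) S <= 2 AB. *)
have := quadratic (Num.sqrt B) (Num.sqrt A).
rewrite !sqr_sqrtr // (mulrC (Num.sqrt B)) => h.
rewrite -(ler_pM2l ABgt0) [X in _ <= X]mulrACA -!expr2 !sqr_sqrtr //; lra.
Qed.

Lemma ler_enormD x y : enorm (x + y) <= enorm x + enorm y.
Proof.
have sumsq_ge0 z : 0 <= \sum_i z ord0 i ^+ 2 by apply: sumr_ge0 => i _; exact: sqr_ge0.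
rewrite /enorm -ler_sqr ?nnegrE ?addr_ge0 ?sqrtr_ge0 // sqrrD !sqr_sqrtr //.
have := CauchySchwarz_sum (fun i => x ord0 i) (fun i => y ord0 i).
suff -> : \sum_i (x + y) ord0 i ^+ 2 =
    \sum_i x ord0 i ^+ 2 + \sum_i y ord0 i ^+ 2 + 2 * \sum_i x ord0 i * y ord0 i by lra.
by rewrite mulr_sumr -!big_split /=; apply: eq_bigr => i _; rewrite mxE; ring.
Qed.

Lemma ler_enorm_distD x y z : enorm (x - z) <= enorm (x - y) + enorm (y - z).
Proof. by have := ler_enormD (x - y) (y - z); rewrite addrA subrK. Qed.

Lemma enorm_continuous : continuous (@enorm R n).
Proof.
have : continuous (fun y : 'rV[R]_n => \sum_i y ord0 i ^+ 2).
  apply: continuous_big => [|i _ y]; first exact: add_continuous.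
  by apply: continuousM; exact: coord_continuous.
by move=> sum_cont x; apply: continuous_comp; [exact: sum_cont|exact: sqrt_continuous].
Qed.

Lemma dist_le A x y : A y -> dist x A <= enorm (x - y).
Proof.
move=> Ay; apply: ge_inf; last by exists y.
by exists 0 => _ [z _ <-]; exact: enorm_ge0.
Qed.

Lemma dist_subset_le A B x : B `<=` A -> B !=set0 -> dist x A <= dist x B.
Proof.
move=> BA [y By]; apply: lb_le_inf; first by exists (enorm (x - y)), y.
by move=> _ [z Bz <-]; apply/dist_le/BA.
Qed.

Lemma enormB_continuous x : continuous (fun z => enorm (z - x)).
Proof.
move=> z; apply: continuous_comp; last exact: enorm_continuous.
by apply: continuousB; [|exact: cst_continuous].
Qed.

Lemma enormB_lt_near x q r : enorm (x - q) < r -> \forall z \near x, enorm (z - q) < r.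
Proof.
move=> xq; near=> z; near: z; apply: (cvgr_lt _ _ _ xq); exact: enormB_continuous.
Unshelve. all: by end_near.
Qed.

Lemma dist_contact_subset A B x y : B `<=` A -> B y -> contact A x y ->
  dist x B = dist x A.
Proof.
move=> BA By [Ay yd]; apply/le_anti; rewrite -[X in _ <= X]yd dist_le //=.
by apply: dist_subset_le => //; exists y.
Qed.

Lemma compact_contact A x : compact A -> A !=set0 -> contact A x !=set0.
Proof.
move=> cA A0.
have [y /set_mem Ay ymin] :=
  EVT_min_rV A0 cA (continuous_subspaceT (enormB_continuous (x := x))).
exists y; split => //; apply/le_anti; rewrite dist_le // andbT.
apply: lb_le_inf; first by exists (enorm (x - y)), y.
by move=> _ [z Az <-]; rewrite !(enorm_distC x); apply/ymin/mem_set.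
Qed.

End euclidean_norm.

Section normed_module_topology.
Variables (R : realType) (V : normedModType R).

Lemma line_continuous (x v : V) : continuous (fun s : R => x + s *: v).
Proof.
move=> s; apply: (@continuousD _ _ _ (fun=> x) (fun s : R => s *: v)).
  exact: cst_continuous.
exact: scalel_continuous.
Qed.

Lemma translation_continuous (v : V) : continuous (fun x : V => x + v).
Proof.
move=> x; apply: (@continuousD _ _ _ id (fun=> v)); first exact: cvg_id.
exact: cst_continuous.
Qed.

Lemma star_shaped_connected (A : set V) c : A c ->
  (forall y, A y -> forall s, s \in `[0, 1] -> A (c + s *: (y - c))) -> connected A.
Proof.
move=> Ac Astar.
have -> : A = \bigcup_(y in A) ((fun s => c + s *: (y - c)) @` `[0, 1]).
  apply/seteqP; split => [y Ay|_ [y Ay [s s01 <-]]]; last exact: Astar.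
  exists y => //; exists 1; first by rewrite /= in_itv /= lexx ler01.
  by rewrite scale1r addrC subrK.
apply: bigcup_connected => [|y _].
  by exists c => y _; exists 0; rewrite ?scale0r ?addr0 //= in_itv /= lexx ler01.
apply: connected_continuous_connected; first exact: segment_connected.
exact/continuous_subspaceT/line_continuous.
Qed.

Lemma connected_setT : connected [set: V].
Proof. by apply: (@star_shaped_connected _ 0). Qed.

Lemma closed_ball_connected (p : V) r : 0 <= r -> connected (closed_ball_ Num.norm p r).
Proof.
move=> r0; apply: (@star_shaped_connected _ p) => [|y py s].
  by rewrite /closed_ball_ /= subrr normr0.
rewrite /closed_ball_ /= in_itv /= => /andP[s0 s1].
rewrite opprD addrA subrr sub0r normrN normrZ ger0_norm // distrC.
by rewrite (le_trans _ py) // ler_piMl.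
Qed.

Lemma bounded_closure (A : set V) : bounded_set A -> bounded_set (closure A).
Proof.
rewrite /bounded_set /= /bounded_near; apply: filterS => M AM x.
have /closure_id ball_closure := @closed_closed_ball_ _ _ (0 : V) M.
have : closure A `<=` closed_ball_ Num.norm (0 : V) M.
  rewrite ball_closure; apply: closureS => y /AM.
  by rewrite /closed_ball_ /= sub0r normrN.
by move=> /[apply]; rewrite /closed_ball_ /= sub0r normrN.
Qed.

End normed_module_topology.

Lemma boundary_closed (T : topologicalType) (A : set T) : closed (boundary A).
Proof.
rewrite /boundary setDE; apply: closedI; first exact: closed_closure.
exact/open_closedC/open_interior.
Qed.

Section bounded_sets_in_rV.
Variables (R : realType) (n : nat).
Implicit Types A : set 'rV[R]_n.

Lemma closed_ball_compact (p : 'rV[R]_n) r : compact (closed_ball_ Num.norm p r).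
Proof.
apply: bounded_closed_compact; last exact: closed_closed_ball_.
exists (`|p| + r); split; first exact: num_real.
move=> M pM y; rewrite /closed_ball_ /= => py.
rewrite ltW // (le_lt_trans _ pM) // -[y](addrNK p) (le_trans (ler_normD _ _)) //.
by rewrite addrC lerD2l distrC.
Qed.

Lemma boundary_compact A : bounded_set A -> compact (boundary A).
Proof.
move=> /bounded_closure; rewrite /bounded_set /= /bounded_near => Abdd.
apply: bounded_closed_compact; last exact: boundary_closed.
by apply: filterS Abdd => M AM x [/AM].
Qed.

Lemma boundary_neq0 A : (0 < n)%N -> A !=set0 -> open A -> bounded_set A ->
  boundary A !=set0.
Proof.
move=> n_gt0 A0 oA Abdd; apply: contrapT => boundary0.
have Aclosed : closure A `<=` A.
  move=> x Ax; apply: contrapT => nAx; apply: boundary0; exists x; split => //.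
  by move/interior_subset.
have AT : A = [set: 'rV[R]_n].
  apply: connected_setT => //; first by exists A => //; rewrite setTI.
  exists (closure A); first exact: closed_closure.
  by rewrite setTI; apply/seteqP; split => //; exact: subset_closure.
have [M M0 AM] := ex_strict_bound_gt0 Abdd.
pose y : 'rV[R]_n := const_mx 1.
have y_gt0 : 0 < `|y|.
  rewrite normr_gt0; apply/negP => /eqP/matrixP/(_ ord0 (Ordinal n_gt0)).
  by rewrite !mxE => /eqP; rewrite oner_eq0.
have := AM ((M / `|y|) *: y); rewrite AT => /(_ I).
by rewrite /= normrZ ger0_norm ?divr_ge0 ?ltW // divfK ?gt_eqF // ltxx.
Qed.

End bounded_sets_in_rV.

Section differentiable_on_lines.
Variables (R : realType) (n : nat).
Implicit Types (f : 'rV[R]_n -> R) (U : set 'rV[R]_n) (x v : 'rV[R]_n).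

Lemma CkOn_continuous k U f x : CkOn k U f -> U x -> {for x, continuous f}.
Proof.
case: k => [/(_ x)//|k /= [df _] Ux].
exact/differentiable_continuous/df.
Qed.

Lemma derive_dir_gt0 f x v : differentiable f x -> 'D_v f x != 0 ->
  exists w, 0 < 'D_w f x.
Proof.
move=> df; rewrite neq_lt => /orP[Dv_lt0|]; last by exists v.
have dN : 'd f x (- v) = - 'd f x v := raddfN _ _.
by exists (- v); rewrite deriveE // dN -deriveE // oppr_gt0.
Qed.

Lemma is_derive_line f x v t : differentiable f (x + t *: v) ->
  is_derive t 1 (fun s => f (x + s *: v)) ('D_v f (x + t *: v)).
Proof.
move=> df.
have line_quotient : (fun h : R => h^-1 *: ((fun s => f (x + s *: v)) (h *: 1 + t)
                        - f (x + t *: v))) =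
                     (fun h : R => h^-1 *: (f (h *: v + (x + t *: v)) - f (x + t *: v))).
  by apply: funext => h /=; rewrite [h%:A]mulr1 scalerDl addrCA addrC.
have dv : derivable f (x + t *: v) v by exact: diff_derivable.
by apply: DeriveDef; rewrite /derivable /derive /= line_quotient.
Qed.

Lemma line_increasing f x v a b :
  (forall s, s \in `[a, b] -> differentiable f (x + s *: v) /\ 0 < 'D_v f (x + s *: v)) ->
  {in `[a, b] &, {homo (fun s => f (x + s *: v)) : s t / s < t}}.
Proof.
move=> Df_gt0; have Dline s : s \in `[a, b] ->
    is_derive s 1 (fun s => f (x + s *: v)) ('D_v f (x + s *: v)).
  by move=> /Df_gt0[df _]; exact: is_derive_line.
have oc s : s \in `]a, b[ -> s \in `[a, b] by apply: subset_itv_oo_cc.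
apply: gtr0_derive1_lt_cc => [s /oc sab|s /oc sab|].
- exact: (Dline s sab).(ex_derive).
- by rewrite derive1E (Dline s sab).(derive_val); exact: (Df_gt0 s sab).2.
- apply: derivable_within_continuous => s sab; exact: (Dline s sab).(ex_derive).
Qed.

End differentiable_on_lines.

Section sublevel_set.
Variables (R : realType) (n : nat) (Om U : set 'rV[R]_n) (phi : 'rV[R]_n -> R).
Hypotheses (Om_open : open Om) (U_open : open U)
  (OmU : Om `&` U = [set x | U x /\ phi x < 0]).

Lemma sublevelP x : U x -> Om x <-> phi x < 0.
Proof.
move=> Ux; split => [Omx|phix].
  by have : (Om `&` U) x by []; rewrite OmU => -[].
by have : [set x | U x /\ phi x < 0] x by []; rewrite -OmU => -[].
Qed.

Lemma boundary_sublevel_eq0 z : U z -> {for z, continuous phi} -> boundary Om z ->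
  phi z = 0.
Proof.
move=> Uz phi_cont [Om_cl Om_int]; case: (ltgtP (phi z) 0) => // phiz.
  by case: Om_int; apply: Om_open; apply/sublevelP.
have [w [Omw [Uw phiw]]] : Om `&` (U `&` [set w | 0 < phi w]) !=set0.
  apply: Om_cl; apply: filterI; first exact: open_nbhs_nbhs.
  exact: cvgr_gt _ phi_cont _ phiz.
by have := (sublevelP Uw).1 Omw; rewrite ltNge ltW.
Qed.

End sublevel_set.

Section crossing_time.
Variables (R : realType) (n : nat) (phi : 'rV[R]_n -> R) (v : 'rV[R]_n).
Variables (Y : set 'rV[R]_n) (dl : R).
Hypotheses (dl_gt0 : 0 < dl) (Y_open : open Y)
  (phi_cont : forall y t, Y y -> t \in `[- dl, dl] -> {for y + t *: v, continuous phi})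
  (phi_incr : forall y, Y y ->
     {in `[- dl, dl] &, {homo (fun t => phi (y + t *: v)) : s t / s < t}})
  (phi_lt0 : forall y, Y y -> phi (y + (- dl) *: v) < 0)
  (phi_gt0 : forall y, Y y -> 0 < phi (y + dl *: v)).

Let phi_le_mono y s t : Y y -> s \in `[- dl, dl] -> t \in `[- dl, dl] ->
  (phi (y + s *: v) <= phi (y + t *: v)) = (s <= t).
Proof. by move=> /phi_incr/le_mono_in; apply. Qed.

Let phi_lt_mono y s t : Y y -> s \in `[- dl, dl] -> t \in `[- dl, dl] ->
  (phi (y + s *: v) < phi (y + t *: v)) = (s < t).
Proof. by move=> /phi_incr/le_mono_in/leW_mono_in; apply. Qed.

Lemma crossing_exists y : Y y -> exists2 t, t \in `]- dl, dl[ & phi (y + t *: v) = 0.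
Proof.
move=> Yy; have dl_ge0 : - dl <= dl by rewrite ge0_cp // ltW.
have line_cont : {within `[- dl, dl], continuous (fun t => phi (y + t *: v))}.
  apply: continuous_in_subspaceT => t /set_mem tdl.
  apply: continuous_comp; [exact: line_continuous|exact: phi_cont].
have [| t tdl phit0] := @IVT _ (fun t => phi (y + t *: v)) _ _ 0 dl_ge0 line_cont.
  by rewrite ge_min le_max (ltW (phi_lt0 Yy)) (ltW (phi_gt0 Yy)) orbT.
have t_neq_lo : - dl != t.
  by apply: contraPneq (phi_lt0 Yy) => ->; rewrite phit0 ltxx.
have t_neq_hi : t != dl.
  by apply: contraPneq (phi_gt0 Yy) => <-; rewrite phit0 ltxx.
by exists t => //; move: tdl; rewrite !in_itv /= !lt_neqAle t_neq_lo t_neq_hi.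
Qed.

Lemma crossing_choice : exists tf : 'rV[R]_n -> R,
  forall y, Y y -> (tf y \in `]- dl, dl[) /\ phi (y + tf y *: v) = 0.
Proof.
have crossing y : exists t, Y y -> (t \in `]- dl, dl[) /\ phi (y + t *: v) = 0.
  have [Yy|NYy] := pselect (Y y); last by exists 0.
  by have [t tdl phit] := crossing_exists Yy; exists t.
by have [tf tf_spec] := choice crossing; exists tf.
Qed.

Let phi_shift_cont y t : Y y -> t \in `[- dl, dl] ->
  {for y, continuous (fun z : 'rV[R]_n => phi (z + t *: v))}.
Proof.
move=> Yy tdl; apply: continuous_comp; first exact: translation_continuous.
exact: phi_cont.
Qed.

Variable tf : 'rV[R]_n -> R.
Hypotheses (tf_itv : forall y, Y y -> tf y \in `]- dl, dl[)
  (tf_zero : forall y, Y y -> phi (y + tf y *: v) = 0).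

Let tf_itv_cc y : Y y -> tf y \in `[- dl, dl].
Proof. by move=> /tf_itv; apply: subset_itv_oo_cc. Qed.

Lemma crossing_gt y t : Y y -> t \in `[- dl, dl] -> phi (y + t *: v) < 0 -> t < tf y.
Proof.
by move=> Yy tdl; rewrite -(tf_zero Yy) (phi_lt_mono Yy tdl (tf_itv_cc Yy)).
Qed.

Lemma crossing_lt y t : Y y -> t \in `[- dl, dl] -> 0 < phi (y + t *: v) -> tf y < t.
Proof.
by move=> Yy tdl; rewrite -(tf_zero Yy) (phi_lt_mono Yy (tf_itv_cc Yy) tdl).
Qed.

Lemma crossing_unique y t : Y y -> t \in `[- dl, dl] -> phi (y + t *: v) = 0 ->
  t = tf y.
Proof.
move=> Yy tdl phit0; have tfdl := tf_itv_cc Yy.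
apply/le_anti; rewrite -(phi_le_mono Yy tdl tfdl) -(phi_le_mono Yy tfdl tdl).
by rewrite phit0 tf_zero // lexx.
Qed.

Lemma crossing_continuous y : Y y -> {for y, continuous tf}.
Proof.
move=> Yy; apply/(@cvgrPdist_lt _ _ _ _ (nbhs_filter y) tf (tf y)).2 => e e_gt0.
have := tf_itv Yy; rewrite in_itv /= => /andP[lo hi].
set a := Num.max (tf y - e) (- dl); set b := Num.min (tf y + e) dl.
have a_lt : a < tf y by rewrite gt_max lo andbT ltrBlDr ltrDl.
have b_gt : tf y < b by rewrite lt_min hi andbT ltrDl.
have a_itv : a \in `[- dl, dl].
  by rewrite in_itv /= le_max lexx orbT (le_trans (ltW a_lt)) // ltW.
have b_itv : b \in `[- dl, dl].
  by rewrite in_itv /= ge_min lexx orbT andbT (le_trans _ (ltW b_gt)) // ltW.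
have phia : phi (y + a *: v) < 0.
  by rewrite -(tf_zero Yy) (phi_lt_mono Yy a_itv (tf_itv_cc Yy)).
have phib : 0 < phi (y + b *: v).
  by rewrite -(tf_zero Yy) (phi_lt_mono Yy (tf_itv_cc Yy) b_itv).
near=> z.
have Yz : Y z by near: z; exact: open_nbhs_nbhs.
have a_ltz : a < tf z.
  by apply: crossing_gt => //; near: z; exact: cvgr_lt _ (phi_shift_cont Yy a_itv) _ phia.
have b_gtz : tf z < b.
  by apply: crossing_lt => //; near: z; exact: cvgr_gt _ (phi_shift_cont Yy b_itv) _ phib.
rewrite ltr_distlC (le_lt_trans _ a_ltz) ?(lt_le_trans b_gtz) //.
  by rewrite ge_min lexx.
by rewrite le_max lexx.
Unshelve. all: by end_near.
Qed.

Lemma crossing_closure y : Y y ->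
  closure [set y + s *: v | s in `]- dl, tf y[] (y + tf y *: v).
Proof.
move=> Yy B B_nbhs.
have B_near : \forall s \near tf y, B (y + s *: v).
  exact: (@line_continuous _ _ y v (tf y)).
have := tf_itv Yy; rewrite in_itv /= => /andP[lo _].
have : closure [set s : R | s < tf y] (tf y) by rewrite closure_lt /=.
case/(_ _ (filterI B_near (lt_nbhsr lo))) => s [s_lt [Bs s_gt]].
by exists (y + s *: v); split => //; exists s => //; rewrite /= in_itv /= s_gt s_lt.
Qed.

Lemma crossing_graph_continuous C : C `<=` Y ->
  {within C, continuous (fun y => y + tf y *: v)}.
Proof.
move=> CY; apply: continuous_in_subspaceT => y /set_mem /CY Yy.
apply: (@continuousD _ _ _ id (fun y => tf y *: v)); first exact: cvg_id.
exact/continuousZr_tmp/crossing_continuous.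
Qed.

Variables (Om U : set 'rV[R]_n).
Hypotheses (Om_open : open Om) (U_open : open U)
  (OmU : Om `&` U = [set x | U x /\ phi x < 0])
  (U_tube : forall y t, Y y -> t \in `[- dl, dl] -> U (y + t *: v)).

Lemma crossing_boundary y : Y y -> boundary Om (y + tf y *: v).
Proof.
move=> Yy; split.
  apply: closureS (crossing_closure Yy) => _ [s s_itv <-].
  have s_lt : s < tf y by move: s_itv; rewrite /= in_itv /= => /andP[].
  have s_itv_cc : s \in `[- dl, dl].
    apply: subset_itv_oo_cc; move: s_itv (tf_itv Yy); rewrite /= !in_itv /=.
    by move=> /andP[-> /lt_trans lt_dl] /andP[_ /lt_dl].
  apply/(sublevelP OmU (U_tube Yy s_itv_cc)).
  by rewrite -(tf_zero Yy) (phi_lt_mono Yy s_itv_cc (tf_itv_cc Yy)).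
move=> /interior_subset /(sublevelP OmU (U_tube Yy (tf_itv_cc Yy))).
by rewrite tf_zero // ltxx.
Qed.

Lemma boundary_crossing_eq0 z : Y z -> boundary Om z -> tf z = 0.
Proof.
have zero_itv : 0 \in `[- dl, dl] by rewrite in_itv /= oppr_le0 ltW.
move=> Yz Sz; apply/esym/(crossing_unique Yz zero_itv); rewrite scale0r addr0.
have Uz : U z by have := U_tube Yz zero_itv; rewrite scale0r addr0.
have phi_cont_z : {for z, continuous phi}.
  by have := phi_cont Yz zero_itv; rewrite scale0r addr0.
by apply: (boundary_sublevel_eq0 Om_open U_open OmU Uz).
Qed.

End crossing_time.

Lemma tube_in_ball (R : realType) (V : normedModType R) (p v : V) e : 0 < e ->
  exists2 dl, 0 < dl &
    forall y t, ball p (e / 2) y -> t \in `[- dl, dl] -> ball p e (y + t *: v).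
Proof.
move=> e_gt0; have v1_gt0 : 0 < `|v| + 1 by rewrite ltr_wpDl.
exists (e / (2 * (`|v| + 1))); first by rewrite divr_gt0 ?mulr_gt0.
move=> y t; rewrite -!ball_normE /ball_ /= in_itv /= -ler_norml => py tdl.
rewrite opprD addrA (le_lt_trans (ler_normB _ _)) // [e in _ < e]splitr ltr_leD //.
rewrite normrZ (le_trans (ler_wpM2r _ tdl)) // invfM -mulrA ler_pM2l //.
by rewrite mulrAC ler_pdivrMr // ler_pM2l ?invr_gt0 // lerDl.
Qed.

Section boundary_chart.
Variables (R : realType) (n k : nat) (Om : set 'rV[R]_n).
Hypotheses (k_gt0 : (0 < k)%N) (Om_Ck : Ck_boundary k Om).

Lemma boundary_chart (p : 'rV[R]_n) : boundary Om p ->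
  exists (U : set 'rV[R]_n) (phi : 'rV[R]_n -> R) (v : 'rV[R]_n),
  [/\ open_nbhs p U, Om `&` U = [set x | U x /\ phi x < 0],
    forall x, U x -> differentiable phi x,
    forall x, U x -> {for x, continuous ('D_v phi)} & 0 < 'D_v phi p].
Proof.
move: k_gt0 Om_Ck => /prednK <- [_ /[apply]].
case=> U [phi [U_open Up [phi_diff phi_Dk] Dphi_neq0 OmU]].
have [w Dw_neq0] := Dphi_neq0 p Up.
have [v Dv_gt0] := derive_dir_gt0 (phi_diff _ Up) Dw_neq0.
by exists U, phi, v; split => // x Ux; apply: CkOn_continuous (phi_Dk v) Ux.
Qed.

End boundary_chart.

Section flow_box.
Variables (R : realType) (n : nat) (U W : set 'rV[R]_n) (phi : 'rV[R]_n -> R).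
Variables (v p : 'rV[R]_n).
Hypotheses (U_open : open U) (Up : U p) (W_nbhs : nbhs p W)
  (phi_diff : forall x, U x -> differentiable phi x)
  (Dphi_cont : forall x, U x -> {for x, continuous ('D_v phi)})
  (phi_p : phi p = 0) (Dv_gt0 : 0 < 'D_v phi p).

Lemma flow_box : exists rho dl, [/\ 0 < rho, 0 < dl,
  forall y t, ball p rho y -> t \in `[- dl, dl] -> U (y + t *: v) /\ W (y + t *: v),
  forall y, ball p rho y ->
    {in `[- dl, dl] &, {homo (fun t => phi (y + t *: v)) : s t / s < t}} &
  forall y, ball p rho y -> phi (y + (- dl) *: v) < 0 < phi (y + dl *: v)].
Proof.
have [e e_gt0 ball_e] : exists2 e, 0 < e &
    ball p e `<=` U `&` W `&` [set x | 0 < 'D_v phi x].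
  apply/nbhs_ballP; apply: filterI; first by apply: filterI => //; exact: open_nbhs_nbhs.
  exact: cvgr_gt _ (Dphi_cont Up) _ Dv_gt0.
have [dl dl_gt0 tube] := tube_in_ball p v e_gt0.
have phi_incr y : ball p (e / 2) y ->
    {in `[- dl, dl] &, {homo (fun t => phi (y + t *: v)) : s t / s < t}}.
  move=> py; apply: line_increasing => t tdl.
  by have [[Ut _] Dt] := ball_e _ (tube _ _ py tdl); split => //; exact: phi_diff.
have lo_itv : - dl \in `[- dl, dl] by rewrite in_itv /= lexx ge0_cp // ltW.
have hi_itv : dl \in `[- dl, dl] by rewrite in_itv /= lexx ge0_cp // ltW.
have zero_itv : 0 \in `[- dl, dl] by rewrite in_itv /= oppr_le0 ltW.
have phi_cont_tube y t : ball p (e / 2) y -> t \in `[- dl, dl] ->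
    {for y, continuous (fun z : 'rV[R]_n => phi (z + t *: v))}.
  move=> py tdl; apply: continuous_comp; first exact: translation_continuous.
  have [[Ut _] _] := ball_e _ (tube _ _ py tdl).
  exact/differentiable_continuous/phi_diff.
have p_ball : ball p (e / 2) p by apply: ballxx; rewrite divr_gt0.
have phi_lo : phi (p + (- dl) *: v) < 0.
  have := phi_incr _ p_ball _ _ lo_itv zero_itv; rewrite scale0r addr0 phi_p.
  by apply; rewrite oppr_lt0.
have phi_hi : 0 < phi (p + dl *: v).
  by have := phi_incr _ p_ball _ _ zero_itv hi_itv; rewrite scale0r addr0 phi_p; apply.
have [rho rho_gt0 ball_rho] : exists2 rho, 0 < rho & ball p rho `<=` [set y |
    [/\ ball p (e / 2) y, phi (y + (- dl) *: v) < 0 & 0 < phi (y + dl *: v)]].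
  apply/nbhs_ballP; near=> y; split.
  - by near: y; apply: nbhsx_ballx; rewrite divr_gt0.
  - by near: y; exact: cvgr_lt _ (phi_cont_tube _ _ p_ball lo_itv) _ phi_lo.
  - by near: y; exact: cvgr_gt _ (phi_cont_tube _ _ p_ball hi_itv) _ phi_hi.
exists rho, dl; split => // [y t /ball_rho[py _ _] tdl|y /ball_rho[py _ _]|].
- by have [[Ut Wt] _] := ball_e _ (tube _ _ py tdl).
- exact: phi_incr.
- by move=> y /ball_rho[_ -> ->].
Unshelve. all: by end_near.
Qed.

End flow_box.

Lemma boundary_local_piece (R : realType) (n k : nat) (Om : set 'rV[R]_n)
    (p : 'rV[R]_n) (W : set 'rV[R]_n) :
  (0 < k)%N -> Ck_boundary k Om -> boundary Om p -> nbhs p W ->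
  exists K, [/\ K `<=` boundary Om `&` W, connected K, closed K &
                relint (boundary Om) K p].
Proof.
move=> k_gt0 Om_Ck Sp Wp; have Om_open := Om_Ck.1.
have [U [phi [v [[U_open Up] OmU phi_diff Dphi_cont Dv_gt0]]]] :=
  boundary_chart k_gt0 Om_Ck Sp.
have phi_cont x : U x -> {for x, continuous phi}.
  by move=> Ux; exact/differentiable_continuous/phi_diff.
have phi_p : phi p = 0 := boundary_sublevel_eq0 Om_open U_open OmU Up (phi_cont _ Up) Sp.
have [rho [dl [rho_gt0 dl_gt0 tube phi_incr phi_sign]]] :=
  flow_box U_open Up Wp phi_diff Dphi_cont phi_p Dv_gt0.
pose Y := ball p rho.
have U_tube y t : Y y -> t \in `[- dl, dl] -> U (y + t *: v).
  by move=> Yy tdl; have [] := tube _ _ Yy tdl.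
have phi_cont_tube y t : Y y -> t \in `[- dl, dl] -> {for y + t *: v, continuous phi}.
  by move=> Yy tdl; apply/phi_cont/U_tube.
have phi_lt0 y : Y y -> phi (y + (- dl) *: v) < 0 by case/phi_sign/andP.
have phi_gt0 y : Y y -> 0 < phi (y + dl *: v) by case/phi_sign/andP.
have [tf tf_spec] := crossing_choice dl_gt0 phi_cont_tube phi_lt0 phi_gt0.
have tf_itv y : Y y -> tf y \in `]- dl, dl[ by move=> /tf_spec[].
have tf_zero y : Y y -> phi (y + tf y *: v) = 0 by move=> /tf_spec[].
have tf_eq0 := boundary_crossing_eq0 dl_gt0 phi_cont_tube phi_incr tf_itv tf_zero
  Om_open U_open OmU U_tube.
pose B := closed_ball_ Num.norm p (rho / 2).
have BY : B `<=` Y.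
  move=> y; rewrite /B /Y -ball_normE /ball_ /closed_ball_ /= => /le_lt_trans; apply.
  by rewrite ltr_pdivrMr // ltr_pMr // ltr1n.
have F_cont :=
  crossing_graph_continuous (ball_open p rho) phi_cont_tube phi_incr tf_itv tf_zero BY.
exists [set y + tf y *: v | y in B]; split.
- move=> _ [y /BY Yy <-]; split.
    exact: (crossing_boundary phi_incr tf_itv tf_zero OmU U_tube).
  by have [] := tube _ _ Yy (subset_itv_oo_cc (tf_itv _ Yy)).
- apply: connected_continuous_connected F_cont.
  by apply: closed_ball_connected; rewrite divr_ge0 // ltW.
- apply: compact_closed; first exact: norm_hausdorff.
  by apply: continuous_compact F_cont _; exact: closed_ball_compact.
have half_ball z : ball p (rho / 2) z -> B z.
  by rewrite -ball_normE /ball_ /closed_ball_ /= => /ltW.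
have p_half : ball p (rho / 2) p by apply: ballxx; rewrite divr_gt0.
have Yp : Y p by apply: ballxx.
split; first by exists p; [exact: half_ball|rewrite tf_eq0 ?scale0r ?addr0].
exists (ball p (rho / 2)); do 2?split => //; first exact: ball_open.
move=> z [/half_ball Bz Sz]; exists z => //.
by rewrite tf_eq0 ?scale0r ?addr0 //; exact: BY.
Qed.

Section voronoi.
Variables (R : realType) (V : normedModType R) (I : finType) (p : I -> V).

Definition voronoi_cell i := [set z | forall j, j != i -> `|z - p i| < `|z - p j|].

Lemma voronoi_cell_disjoint i j : i != j -> voronoi_cell i `&` voronoi_cell j = set0.
Proof.
move=> ij; apply/seteqP; split => // z [/(_ j) zi /(_ i) zj].
have ji : j != i by rewrite eq_sym.
by have := lt_trans (zi ji) (zj ij); rewrite ltxx.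
Qed.

Lemma voronoi_cell_nbhs i : injective p -> nbhs (p i) (voronoi_cell i).
Proof.
move=> p_inj; apply: filter_forall => j; case: eqVneq => [->|ji]; first exact: nearW.
have dist_cont (c : V) : continuous (fun z => `|z - c|).
  by move=> z; apply: cvg_norm; exact: translation_continuous.
have g_lt0 : `|p i - p i| - `|p i - p j| < 0.
  by rewrite subrr normr0 sub0r oppr_lt0 normr_gt0 subr_eq0 (inj_eq p_inj) eq_sym.
have g_cont : {for p i, continuous (fun z => `|z - p i| - `|z - p j|)}.
  exact: continuousB (dist_cont _ _) (dist_cont _ _).
apply: filterS (cvgr_lt _ g_cont _ g_lt0) => z.
by rewrite subr_lt0 => + _.
Qed.

End voronoi.

Section contact_points_nearby.
Variables (R : realType) (n : nat) (S V : set 'rV[R]_n) (q : 'rV[R]_n).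
Hypotheses (S_compact : compact S) (S_neq0 : S !=set0).
Hypotheses (V_open : open V) (contact_V : contact S q `<=` V).

Lemma contact_gap : exists2 c, dist q S < c & forall y, S y -> ~ V y -> c <= enorm (q - y).
Proof.
have K_compact : compact (S `&` ~` V).
  by apply: compact_closedI => //; exact: open_closedC.
have [[y0 Ky0]|K0] := pselect (S `&` ~` V !=set0); last first.
  by exists (dist q S + 1) => [|y Sy NVy]; [rewrite ltrDl|case: K0; exists y].
have [y [[Sy NVy] yd]] := compact_contact q K_compact (ex_intro _ y0 Ky0).
exists (enorm (q - y)) => [|z Sz NVz]; last by rewrite yd dist_le.
rewrite lt_neqAle dist_le // andbT; apply/eqP => dy.
by apply: NVy; apply: contact_V; split.
Qed.

Lemma contact_near : \forall x \near q, contact S x `<=` V.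
Proof.
have [c dc gap] := contact_gap; set d := dist q S in dc.
have [p0 [Sp0 p0d]] := compact_contact q S_compact S_neq0.
have eta_gt0 : enorm (q - q) < (c - d) / 2 by rewrite subrr enorm0 divr_gt0 // subr_gt0.
near=> x => y [Sy yd]; apply: contrapT => NVy.
have qx : enorm (x - q) < (c - d) / 2 by near: x; exact: enormB_lt_near.
have xy : enorm (x - y) <= enorm (x - q) + d.
  by rewrite yd /d -p0d (le_trans (dist_le _ Sp0)) // ler_enorm_distD.
have := le_trans (gap _ Sy NVy) (ler_enorm_distD q x y).
rewrite enorm_distC; lra.
Unshelve. all: by end_near.
Qed.

End contact_points_nearby.

Lemma contact_near_relint (R : realType) (n : nat) (I : Type) (S : set 'rV[R]_n)
    (q : 'rV[R]_n) (K : I -> set 'rV[R]_n) (p : I -> 'rV[R]_n) :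
  compact S -> S !=set0 -> contact S q `<=` range p ->
  (forall i, relint S (K i) (p i)) ->
  \forall x \near q, forall y, contact S x y -> exists i, K i y.
Proof.
move=> S_compact S_neq0 contact_p K_relint.
pose V := [set z | exists i U, [/\ open U, U z & U `&` S `<=` K i]].
have V_open : open V.
  rewrite openE => z [i [U [U_open Uz US]]].
  by apply: filterS (open_nbhs_nbhs (conj U_open Uz)) => w Uw; exists i, U.
have contact_V : contact S q `<=` V.
  move=> _ /contact_p[i _ <-]; have [_ [U [U_open [Up US]]]] := K_relint i.
  by exists i, U.
apply: filterS (contact_near S_compact S_neq0 V_open contact_V) => x xV y yx.
by have [i [U [_ Uy US]]] := xV _ yx; exists i; apply: US; split => //; case: yx.
Qed.

Theorem lemma3p12 (R : realType) (n k : nat) (Om : set 'rV[R]_n)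
  (hn : (0 < n)%N) (hk : (2 <= k)%N)
  (Om_ne : Om !=set0) (Om_open : open Om) (Om_bdd : bounded_set Om)
  (Om_Ck : Ck_boundary k Om)
  (q : 'rV[R]_n) (hq : ~ boundary Om q)
  (m : nat) (p : 'I_m -> 'rV[R]_n) (p_inj : injective p)
  (hGamma : contact (boundary Om) q = range p) :
  let S := boundary Om in
  exists r : R, dist q S < r /\
  exists Si : 'I_m -> set 'rV[R]_n,
    (forall i, Si i `<=` S) /\
    (forall i, connected (Si i)) /\
    (forall i, closed (Si i)) /\
    (forall i j, i != j -> Si i `&` Si j = set0) /\
    (forall i, Si i `<=` cball_e q r `&` S) /\
    (forall i, relint S (Si i) (p i)) /\
    exists N : set 'rV[R]_n, nbhs q N /\
      forall x, N x ->
        (forall i, dist x S <= dist x (Si i)) /\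
        exists i, dist x S = dist x (Si i).
Proof.
move=> S; set d := dist q S.
have S_compact : compact S := boundary_compact Om_bdd.
have S_neq0 : S !=set0 := boundary_neq0 hn Om_ne Om_open Om_bdd.
have p_contact i : contact S q (p i) by rewrite hGamma; exists i.
pose W i := voronoi_cell p i `&` [set z | enorm (z - q) < d + 1].
have W_nbhs i : nbhs (p i) (W i).
  apply: filterI; first exact: voronoi_cell_nbhs.
  by apply: enormB_lt_near; rewrite enorm_distC (p_contact i).2 ltrDl.
have [K K_spec] := choice (fun i =>
  boundary_local_piece (ltnW hk) Om_Ck (p_contact i).1 (W_nbhs i)).
have KW i : K i `<=` S `&` W i by case: (K_spec i).
have KS i : K i `<=` S by move=> z /KW[].
have K_relint i : relint S (K i) (p i) by case: (K_spec i).
exists (d + 1); split; first by rewrite ltrDl.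
exists K; split; first exact: KS.
split; first by move=> i; case: (K_spec i).
split; first by move=> i; case: (K_spec i).
split.
  move=> i j ij; rewrite -subset0 -(voronoi_cell_disjoint p ij).
  by move=> z [/KW[_ [zi _]] /KW[_ [zj _]]].
split; first by move=> i z /KW[Sz [_ zq]]; split => //; rewrite /cball_e /= ltW.
split => //; exists [set x | forall y, contact S x y -> exists i, K i y].
split; first by apply: contact_near_relint => //; rewrite hGamma.
move=> x xK; split => [i|].
  by apply: dist_subset_le (KS i) _; exists (p i); case: (K_relint i).
have [y yx] := compact_contact x S_compact S_neq0.
by have [i Kiy] := xK y yx; exists i; rewrite (dist_contact_subset (KS i) Kiy yx).
Qed.
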